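(* Let $h\in\mathcal H$ and $\varphi(\underline{x})=h(x_0,x_1)$ on $X=[0,1]^{\mathbb N_0}$. If $\underline{x}\in\Omega_\varphi$ is periodic under $\sigma$, then $\underline{x}=a^\infty$ for some $a\in\mathrm{m}_h$.
   Context: $X=[0,1]^{\mathbb N_0}$ with metric $d_X(\underline{x},\underline{y})=\sum_{i\ge0}|x_i-y_i|/2^{i+1}$ and shift $\sigma(\underline{x})_i=x_{i+1}$. $\alpha_\varphi=\inf_\mu\int\varphi\,d\mu$ over $\sigma$-invariant Borel probability measures. $B(\underline{x},\underline{y},n;\varepsilon)=\{\underline{z}: d_X(\underline{x},\underline{z})<\varepsilon,\ d_X(\sigma^n\underline{z},\underline{y})<\varepsilon\}$; Mañé potential $S_\varphi(\underline{x},\underline{y})=\lim_{\varepsilon\to0}\inf\{\sum_{i=0}^{n-1}(\varphi(\sigma^i\underline{z})-\alpha_\varphi): n\in\mathbb N,\ \underline{z}\in B(\underline{x},\underline{y},n;\varepsilon)\}$; Aubry set $\Omega_\varphi=\{\underline{x}: S_\varphi(\underline{x},\underline{x})=0\}$. $h^*=\min_x h(x,x)$, $\mathrm{m}_h=\{a: h(a,a)=h^*\}$, $a^\infty=aaa\ldots$. A finite sequence $(x_k,\dots,x_l)$ in $[0,1]$ is minimal (for $h$) if $\sum_{i=k}^{l-1}h(x_i,x_{i+1})\le\sum_{i=k}^{l-1}h(y_i,y_{i+1})$ for every $(y_k,\dots,y_l)$ in $[0,1]$ with $y_k=x_k$, $y_l=x_l$. $\mathcal H$ is the set of Lipschitz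 $h:[0,1]^2\to\mathbb R$ such that (H3) if $\xi_1<\xi_2$ and $\eta_1<\eta_2$ then $h(\xi_1,\eta_1)+h(\xi_2,\eta_2)<h(\xi_1,\eta_2)+h(\xi_2,\eta_1)$; and (H4) if $(x_{-1},x_0,x_1)\ne(x'_{-1},x_0,x'_1)$ are both minimal then $(x_{-1}-x'_{-1})(x_1-x'_1)<0$. (It is known that $\alpha_\varphi=h^*$ in this setting.) *)

From HB Require Import structures.
From mathcomp Require Import all_boot all_order all_algebra.
From mathcomp Require Import all_classical all_reals all_analysis.
Set Implicit Arguments. Unset Strict Implicit. Unset Printing Implicit Defensive.
Import Order.TTheory GRing.Theory Num.Theory.
Import numFieldNormedType.Exports.
Local Open Scope classical_set_scope.
Local Open Scope ring_scope.

Section Defs.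
Variable R : realType.

Definition Xset : set (nat -> R) := [set x | forall i, 0 <= x i <= 1].

Definition shift (x : nat -> R) : nat -> R := fun i => x i.+1.

Definition dX (x y : nat -> R) : R :=
  limn (fun n => \sum_(0 <= i < n) (`|x i - y i| / 2 ^+ i.+1)).

Definition phi_of (h : R -> R -> R) (x : nat -> R) : R := h (x 0%N) (x 1%N).

(* Borel sigma-algebra of the product topology: generated by the coordinate maps *)
Definition cyl_gen : set (set (nat -> R)) :=
  [set A | exists (i : nat) (B : set R), measurable B /\ A = (fun x => x i) @^-1` B].

Definition cylT := g_sigma_algebraType cyl_gen.

Definition invariant_prob (mu : probability cylT R) : Prop :=
  mu (Xset : set cylT) = 1%E /\
  forall A : set cylT, measurable A -> mu ((shift : cylT -> cylT) @^-1` A) = mu A.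

Definition alpha (h : R -> R -> R) : \bar R :=
  ereal_inf [set (\int[mu]_(x in (Xset : set cylT)) (phi_of h x)%:E)%E
            | mu in [set mu : probability cylT R | invariant_prob mu]].

Definition Bset (x y : nat -> R) (n : nat) (eps : R) : set (nat -> R) :=
  [set z | Xset z /\ dX x z < eps /\ dX (iter n shift z) y < eps].

Definition mane_inf (h : R -> R -> R) (x y : nat -> R) (eps : R) : \bar R :=
  ereal_inf [set s | exists (n : nat) (z : nat -> R), (0 < n)%N /\ Bset x y n eps z /\
     s = (\sum_(0 <= i < n) ((phi_of h (iter i shift z))%:E - alpha h))%E].

Definition mane (h : R -> R -> R) (x y : nat -> R) : \bar R :=
  lim (mane_inf h x y @ 0^'+).

Definition aubry (h : R -> R -> R) : set (nat -> R) :=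
  [set x | Xset x /\ mane h x x = 0%E].

Definition hstar (h : R -> R -> R) : R := inf [set h a a | a in [set a : R | 0 <= a <= 1]].

Definition m_h (h : R -> R -> R) : set R :=
  [set a | 0 <= a <= 1 /\ h a a = hstar h].

Definition minimal (h : R -> R -> R) (x : nat -> R) (k l : nat) : Prop :=
  (forall i, (k <= i <= l)%N -> 0 <= x i <= 1) /\
  forall y : nat -> R, (forall i, (k <= i <= l)%N -> 0 <= y i <= 1) ->
    y k = x k -> y l = x l ->
    \sum_(k <= i < l) h (x i) (x i.+1) <= \sum_(k <= i < l) h (y i) (y i.+1).

Definition triple (a b c : R) : nat -> R :=
  fun i => match i with 0%N => a | 1%N => b | _ => c end.

Definition in01 (a : R) : Prop := 0 <= a <= 1.

Definition lipschitz2 (h : R -> R -> R) : Prop :=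
  exists L : R, forall a b c d, in01 a -> in01 b -> in01 c -> in01 d ->
    `|h a b - h c d| <= L * (`|a - c| + `|b - d|).

Definition H3 (h : R -> R -> R) : Prop :=
  forall x1 x2 y1 y2, in01 x1 -> in01 x2 -> in01 y1 -> in01 y2 ->
    x1 < x2 -> y1 < y2 -> h x1 y1 + h x2 y2 < h x1 y2 + h x2 y1.

(* (x_{-1}, x_0, x_1) is encoded as triple x_{-1} x_0 x_1 on indices 0,1,2 *)
Definition H4 (h : R -> R -> R) : Prop :=
  forall am x0 ap am' ap',
    minimal h (triple am x0 ap) 0 2 -> minimal h (triple am' x0 ap') 0 2 ->
    (am, ap) <> (am', ap') -> (am - am') * (ap - ap') < 0.

Definition classH (h : R -> R -> R) : Prop := lipschitz2 h /\ H3 h /\ H4 h.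

Definition shift_periodic (x : nat -> R) : Prop := exists p : nat, (0 < p)%N /\ iter p shift x = x.

End Defs.

(* If [alpha h] is [+oo], or [h b b < alpha h] for some [b], the orbit segments
   that follow [x] for a while, rest at [b] for a long time and then jump back
   onto [x] have arbitrarily negative action, so [S(x,x) < 0]; if [alpha h] is
   [-oo] every action is [+oo].  Otherwise [alpha h <= h b b] for all [b], and
   (H3) yields the Monge inequality: a closed path [c_0, ..., c_n = c_0] costs at
   least [sum_k h(c_k, c_k)] (delete a local extremum and induct).  An orbit
   segment from near [x] back to near [x] is, up to a Lipschitz error, a closed
   path through [(x_j, x_(j+1))].  If [x_j <> x_(j+1)], inserting the midpoint of
   [x_j] and [x_(j+1)] after the first step shows that its cost exceeds
   [n * alpha h] by a fixed amount; the same holds when [x] is constant equal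
   to [a] with [alpha h < h a a].  Either way [S(x,x) > 0].  Hence [x] is
   constant equal to some [a] with [h a a = alpha h <= h*]. *)

From Pilot Require Import Defs.
From HB Require Import structures.
From mathcomp Require Import all_boot all_order all_algebra.
From mathcomp Require Import all_classical all_reals all_analysis.
From mathcomp Require Import ring lra zify.
Set Implicit Arguments. Unset Strict Implicit. Unset Printing Implicit Defensive.
Import Order.TTheory GRing.Theory Num.Theory.
Import numFieldNormedType.Exports.
Local Open Scope classical_set_scope.
Local Open Scope ring_scope.

Section Metric.
Variable R : realType.
Implicit Types x y z : nat -> R.

Lemma in01_dist_le1 (a b : R) : in01 a -> in01 b -> `|a - b| <= 1.
Proof. by move=> /andP[? ?] /andP[? ?]; rewrite ler_norml; apply/andP; split; lra. Qed.

Definition dX_partial x y N : R := \sum_(0 <= i < N) (`|x i - y i| / 2 ^+ i.+1).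

Lemma nondecreasing_dX_partial x y : nondecreasing_seq (dX_partial x y).
Proof.
apply/nondecreasing_seqP => N; rewrite /dX_partial big_nat_recr //= lerDl.
by rewrite divr_ge0 ?exprn_ge0.
Qed.

(* The terms are dominated by the telescoping sequence [2^-max(i,K) - 2^-max(i+1,K)]. *)
Lemma dX_partial_le_prefix x y K N : Xset x -> Xset y ->
  (forall i, (i < K)%N -> x i = y i) -> dX_partial x y N <= 1 / 2 ^+ K.
Proof.
move=> hx hy hxy; pose u i : R := - (1 / 2 ^+ maxn i K).
apply: (@le_trans _ _ (u N - u 0%N)); last first.
  have : 0 <= 1 / 2 ^+ maxn N K :> R by rewrite divr_ge0 ?exprn_ge0.
  by rewrite /u max0n; lra.
rewrite -telescope_sumr // /dX_partial; apply: ler_sum_nat => i _; rewrite /u opprK.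
have [iK|Ki] := ltnP i K.
  by rewrite hxy // subrr normr0 mul0r (maxn_idPr iK) addNr.
rewrite (maxn_idPl (leqW Ki)).
have -> : - (1 / 2 ^+ i.+1) + 1 / 2 ^+ i = 1 / 2 ^+ i.+1 :> R.
  by rewrite exprS; field; rewrite expf_neq0.
by apply: ler_wpM2r; [rewrite invr_ge0 exprn_ge0 | exact: in01_dist_le1 (hx i) (hy i)].
Qed.

Lemma dX_partial_cvg x y : Xset x -> Xset y -> cvgn (dX_partial x y).
Proof.
move=> hx hy; apply: nondecreasing_is_cvgn; first exact: nondecreasing_dX_partial.
exists 1 => _ [N _ <-]; rewrite -[1](divr1 1) -(expr0 2).
by apply: dX_partial_le_prefix.
Qed.

Lemma dX_le_prefix x y K : Xset x -> Xset y ->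
  (forall i, (i < K)%N -> x i = y i) -> dX x y <= 1 / 2 ^+ K.
Proof.
move=> hx hy hxy; apply: limr_le; first exact: dX_partial_cvg.
by apply: nearW => N; exact: dX_partial_le_prefix.
Qed.

Lemma dist_coord_le_dX x y i : Xset x -> Xset y ->
  `|x i - y i| <= 2 ^+ i.+1 * dX x y.
Proof.
move=> hx hy; rewrite mulrC -ler_pdivrMr ?exprn_gt0 //.
have := nondecreasing_cvgn_le (nondecreasing_dX_partial x y) (dX_partial_cvg hx hy) i.+1.
apply: le_trans.
rewrite /dX_partial big_nat_recr //= lerDr.
by apply: sumr_ge0 => k _; rewrite divr_ge0 ?exprn_ge0.
Qed.

Lemma dX_xx x : dX x x = 0.
Proof.
rewrite /dX (_ : (fun N => _) = fun _ => 0); first exact: lim_cst.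
by apply/funext => N; apply: big1 => i _; rewrite subrr normr0 mul0r.
Qed.

End Metric.

Section SumNat.
Variable R : realType.
Implicit Types F G : nat -> R.

Lemma sum_nat_bump F N t : (t <= N)%N ->
  \sum_(0 <= k < N.+1) F k = F t + \sum_(0 <= k < N) F (bump t k).
Proof.
by move=> tN; rewrite !big_mkord (bigD1_ord (Ordinal (tN : (t < N.+1)%N))).
Qed.

Lemma sum_nat_eq_but_one F G N s : (s < N)%N ->
  (forall k, (k < N)%N -> k != s -> F k = G k) ->
  \sum_(0 <= k < N) F k = \sum_(0 <= k < N) G k + (F s - G s).
Proof.
case: N => [//|N]; rewrite ltnS => sN FG; rewrite !(sum_nat_bump _ sN).
rewrite (eq_big_nat _ _ (F2 := fun k => G (bump s k))); first by ring.
move=> k /andP[_ kN]; apply: FG; last by rewrite eq_sym neq_bump.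
by rewrite /bump; case: (leqP s k) => _ /=; lia.
Qed.

Lemma sum_nat_window F n j :
  \sum_(0 <= i < n) F i
    = \sum_(0 <= i < n) F (i + j)%N + \sum_(0 <= i < j) (F i - F (i + n)%N).
Proof.
pose G k := \sum_(0 <= i < n) F (i + k)%N.
have GS k : F k - F (k + n)%N = - G k.+1 - - G k.
  rewrite /G opprK; clear G; case: n => [|n].
    by rewrite !big_geq // addn0 subrr oppr0 addr0.
  rewrite [X in _ = _ + X]big_nat_recl // [X in _ = - X + _]big_nat_recr //= add0n.
  under [X in _ = _ + (_ + X)]eq_bigr do rewrite addSnnS.
  rewrite !addnS (addnC n k); ring.
rewrite (telescope_sumr_eq (fun k => - G k) _ (leq0n j)) => [|k _]; last exact: GS.
have -> : G 0%N = \sum_(0 <= i < n) F i by apply: eq_bigr => i _; rewrite addn0.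
rewrite /G; ring.
Qed.

End SumNat.

Definition path_cost (R : realType) (h : R -> R -> R) (c : nat -> R) n :=
  \sum_(0 <= k < n) h (c k) (c k.+1).

Definition diag_cost (R : realType) (h : R -> R -> R) (c : nat -> R) n :=
  \sum_(0 <= k < n) h (c k) (c k).

Section Monge.
Variable R : realType.
Variable h : R -> R -> R.
Hypothesis h_H3 : H3 h.
Implicit Types c : nat -> R.

Lemma H3_le x1 x2 y1 y2 : in01 x1 -> in01 x2 -> in01 y1 -> in01 y2 ->
  x1 <= x2 -> y1 <= y2 -> h x1 y1 + h x2 y2 <= h x1 y2 + h x2 y1.
Proof.
move=> ? ? ? ?; rewrite le_eqVlt => /orP[/eqP-> _|lx]; first by rewrite addrC.
rewrite le_eqVlt => /orP[/eqP->|ly]; first by rewrite addrC.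
exact/ltW/h_H3.
Qed.

Lemma extremum_cost_ge a b d : in01 a -> in01 b -> in01 d ->
  (a <= b /\ d <= b) \/ (b <= a /\ b <= d) -> h a d + h b b <= h a b + h b d.
Proof.
move=> ha hb hd [[ab db]|[ba bd]]; first exact: H3_le.
have := H3_le hb ha hb hd ba bd; lra.
Qed.

Lemma ex_argmax_nat c a n :
  exists2 t, (a <= t <= a + n)%N & forall k, (a <= k <= a + n)%N -> c k <= c t.
Proof.
elim: n => [|n [t ht tmax]].
  by exists a => [|k ak]; [lia|have -> : k = a by lia].
have split_k k : (a <= k <= a + n.+1)%N -> k = (a + n.+1)%N \/ (a <= k <= a + n)%N.
  by lia.
have [le_ct|lt_tc] := leP (c (a + n.+1)%N) (c t).
  exists t => [|k /split_k [->|/tmax]] //; lia.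
exists (a + n.+1)%N => [|k /split_k [->|/tmax kt]] //; first lia.
exact: ltW (le_lt_trans kt lt_tc).
Qed.

Lemma closed_path_extremum c N : c N.+2 = c 0%N ->
  exists2 t, (0 < t <= N.+1)%N &
    (c t.-1 <= c t /\ c t.+1 <= c t) \/ (c t <= c t.-1 /\ c t <= c t.+1).
Proof.
move=> closed.
have nb k : (k <= N.+2)%N -> c k = c 0%N \/ (1 <= k <= 1 + N)%N.
  move=> kN; have [->|[->|kI]] : k = 0%N \/ k = N.+2 \/ (1 <= k <= 1 + N)%N by lia.
  - by left.
  - by left.
  - by right.
have [tM tMI tmax] := ex_argmax_nat c 1 N.
have [tm tmI tmin] := ex_argmax_nat (fun k => - c k) 1 N.
have [c0M|Mc0] := leP (c 0%N) (c tM).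
  have below k : (k <= N.+2)%N -> c k <= c tM by move/nb => [->|/tmax].
  by exists tM => //; left; split; apply: below; lia.
have above k : (k <= N.+2)%N -> c tm <= c k.
  move/nb => [->|/tmin]; last by rewrite lerN2.
  by have := tmin _ tMI; rewrite lerN2; lra.
by exists tm => //; right; split; apply: above; lia.
Qed.

Lemma diag_cost_bump c N t : (t <= N)%N ->
  diag_cost h c N.+1 = diag_cost h (fun k => c (bump t k)) N + h (c t) (c t).
Proof. by move=> tN; rewrite /diag_cost (sum_nat_bump _ tN) addrC. Qed.

Lemma path_cost_bump c N t : (0 < t <= N)%N ->
  path_cost h c N.+1 = path_cost h (fun k => c (bump t k)) N
    + (h (c t.-1) (c t) + h (c t) (c t.+1) - h (c t.-1) (c t.+1)).
Proof.
move=> /andP[t0 tN]; rewrite /path_cost (sum_nat_bump _ tN).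
rewrite (@sum_nat_eq_but_one _ (fun k => h (c (bump t k)) (c (bump t k.+1)))
  (fun k => h (c (bump t k)) (c (bump t k).+1)) _ t.-1); last 2 first.
- by rewrite prednK.
- move=> k _ kt; rewrite /bump.
  by case: (leqP t k) => ? /=; case: (leqP t k.+1) => ? /=; rewrite ?add0n ?add1n //; lia.
have tt : (t <= t.-1)%N = false by rewrite leqNgt ltn_predL t0.
rewrite /bump tt (prednK t0) leqnn /= add0n add1n; ring.
Qed.

Lemma diag_cost_le_path_cost c n : (forall k, in01 (c k)) -> c n = c 0%N ->
  diag_cost h c n <= path_cost h c n.
Proof.
elim: n c => [|[|N] IH] c c01 closed.
- by rewrite /diag_cost /path_cost !big_geq.
- by rewrite /diag_cost /path_cost !big_nat1 closed.
have [t tI ext] := closed_path_extremum closed.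
have [t0 tN] := andP tI.
have := IH (fun k => c (bump t k)) (fun k => c01 _).
have -> : bump t N.+1 = N.+2 by rewrite /bump tN.
have -> : bump t 0 = 0%N by rewrite /bump leqNgt t0.
move=> /(_ closed).
have := extremum_cost_ge (c01 t.-1) (c01 t) (c01 t.+1) ext.
rewrite (path_cost_bump _ tI) (diag_cost_bump _ tN); lra.
Qed.

(* Apply the Monge inequality to the cycle with [m] inserted between [c 0] and [c 1]. *)
Lemma path_cost_insert c n m : (0 < n)%N -> (forall k, in01 (c k)) -> c n = c 0%N ->
  in01 m ->
  diag_cost h c n + (h (c 0%N) (c 1%N) + h m m - h (c 0%N) m - h m (c 1%N))
    <= path_cost h c n.
Proof.
case: n => [//|N] _ c01 closed m01.
pose c' k := if k == 1%N then m else c (unbump 1 k).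
have c'K k : c' (bump 1 k) = c k by rewrite /c' eq_sym (negbTE (neq_bump _ _)) bumpK.
have c'01 k : in01 (c' k) by rewrite /c'; case: ifP.
have c'closed : c' N.+2 = c' 0%N by rewrite /c' /= closed.
have := diag_cost_le_path_cost c'01 c'closed.
rewrite (@path_cost_bump _ _ 1) // (@diag_cost_bump _ _ 1) //.
have -> : path_cost h (fun k => c' (bump 1 k)) N.+1 = path_cost h c N.+1.
  by apply: eq_bigr => k _; rewrite !c'K.
have -> : diag_cost h (fun k => c' (bump 1 k)) N.+1 = diag_cost h c N.+1.
  by apply: eq_bigr => k _; rewrite !c'K.
rewrite /c' /=; lra.
Qed.

Lemma crossing_gap_lt u v : in01 u -> in01 v -> u < v ->
  exists m d kappa, [/\ in01 m, 0 < d, 0 < kappa & forall a b, in01 a -> in01 b ->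
    `|a - u| <= d -> `|b - v| <= d -> kappa <= h a b + h m m - h a m - h m b].
Proof.
move=> /andP[u0 u1] /andP[v0 v1] uv.
pose d := (v - u) / 4; pose m := (u + v) / 2; pose p := u + d; pose q := v - d.
have inI w : u <= w <= v -> in01 w by move=> /andP[? ?]; apply/andP; split; lra.
have p01 : in01 p by apply: inI; apply/andP; rewrite /p /d; split; lra.
have m01 : in01 m by apply: inI; apply/andP; rewrite /m; split; lra.
have q01 : in01 q by apply: inI; apply/andP; rewrite /q /d; split; lra.
have pm : p < m by rewrite /p /m /d; lra.
have mq : m < q by rewrite /q /m /d; lra.
(* [h a b + h m m - h a m - h m b] is the (H3)-defect of the rectangle [a, m] x [m, b],
   which contains [p, m] x [m, q] when [a] is near [u] and [b] near [v]. *)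
exists m, d, (h p q + h m m - h p m - h m q); split => //.
- by rewrite /d; lra.
- by have := h_H3 p01 m01 m01 q01 pm mq; lra.
move=> a b a01 b01; rewrite !ler_distl => /andP[_ ap] /andP[qb _].
have mb : m <= b by rewrite /m; rewrite /d in qb; lra.
have := H3_le a01 p01 m01 b01 ap mb.
have := H3_le p01 m01 q01 b01 (ltW pm) qb.
lra.
Qed.

End Monge.

Lemma in01_reflect (R : realType) (a : R) : in01 a -> in01 (1 - a).
Proof. by move=> /andP[? ?]; apply/andP; split; lra. Qed.

Lemma H3_reflect (R : realType) (h : R -> R -> R) :
  H3 h -> H3 (fun a b => h (1 - a) (1 - b)).
Proof.
move=> H x1 x2 y1 y2 hx1 hx2 hy1 hy2 lx ly.
have := H _ _ _ _ (in01_reflect hx2) (in01_reflect hx1) (in01_reflect hy2)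
  (in01_reflect hy1).
by rewrite !ltrD2l !ltrN2 => /(_ lx ly); lra.
Qed.

Lemma crossing_gap (R : realType) (h : R -> R -> R) u v :
  H3 h -> in01 u -> in01 v -> u != v ->
  exists m d kappa, [/\ in01 m, 0 < d, 0 < kappa & forall a b, in01 a -> in01 b ->
    `|a - u| <= d -> `|b - v| <= d -> kappa <= h a b + h m m - h a m - h m b].
Proof.
move=> H u01 v01; rewrite neq_lt => /orP[uv|vu]; first exact: crossing_gap_lt.
have [|m [d [kappa [m01 d0 kappa0 gap]]]] :=
  crossing_gap_lt (H3_reflect H) (in01_reflect u01) (in01_reflect v01).
  by rewrite ltrD2l ltrN2.
exists (1 - m), d, kappa; split => //; first exact: in01_reflect.
move=> a b a01 b01 au bv.
have e w z : (1 - w) - (1 - z) = z - w :> R by ring.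
have := gap (1 - a) (1 - b) (in01_reflect a01) (in01_reflect b01).
by rewrite !e !subKr (distrC u) (distrC v); apply.
Qed.

Definition action (R : realType) (h : R -> R -> R) (z : nat -> R) n : \bar R :=
  (\sum_(0 <= i < n) ((phi_of h (iter i (@Defs.shift R) z))%:E - alpha h))%E.

Section Mane.
Variable R : realType.
Variable h : R -> R -> R.
Implicit Types x y z : nat -> R.

Lemma iter_shiftE z n : iter n (@Defs.shift R) z = fun k => z (k + n)%N.
Proof.
elim: n => [|n IH] /=; first by apply/funext => k; rewrite addn0.
by rewrite IH; apply/funext => k; rewrite /Defs.shift addSnnS.
Qed.

Lemma action_fin z n r : alpha h = r%:E ->
  action h z n = (\sum_(0 <= i < n) (h (z i) (z i.+1) - r))%:E.
Proof.
rewrite /action => ->; rewrite -sumEFin; apply: eq_bigr => i _.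
by rewrite iter_shiftE /phi_of add0n add1n.
Qed.

Lemma mane_inf_le_action x y n z eps : (0 < n)%N -> Bset x y n eps z ->
  (mane_inf h x y eps <= action h z n)%E.
Proof. by move=> n0 zB; apply: ereal_inf_lbound; exists n, z. Qed.

Lemma mane_inf_cvg x y : cvg (mane_inf h x y @ 0^'+).
Proof.
apply: nonincreasing_at_right_is_cvge; apply: nearW => _ e1 e2 _ _ e12.
apply: le_ereal_inf_tmp => _ [n [z [n0 [[zX [xz zy]] ->]]]].
apply: ereal_inf_lbound; exists n, z; do !split => //; exact: lt_le_trans e12.
Qed.

Lemma mane_le x y (c : \bar R) :
  (forall eps, 0 < eps -> (mane_inf h x y eps <= c)%E) -> (mane h x y <= c)%E.
Proof.
move=> le_c; apply: lime_le; first exact: mane_inf_cvg.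
by apply: filterS (nbhs_right_gt 0) => eps; exact: le_c.
Qed.

Lemma mane_ge x y (c : \bar R) eps0 : 0 < eps0 ->
  (forall eps, 0 < eps -> eps < eps0 -> (c <= mane_inf h x y eps)%E) ->
  (c <= mane h x y)%E.
Proof.
move=> eps00 ge_c; apply: lime_ge; first exact: mane_inf_cvg.
by apply: filterS2 (nbhs_right_gt 0) (nbhs_right_lt eps00) => eps; exact: ge_c.
Qed.

Lemma Bset_coord x y n eps z i k : Xset x -> Xset y -> 0 < eps -> Bset x y n eps z ->
  (i <= k)%N ->
  `|z i - x i| <= 2 ^+ k.+1 * eps /\ `|z (i + n)%N - y i| <= 2 ^+ k.+1 * eps.
Proof.
move=> xX yX eps0 [zX [xz zy]] ik.
have le_pow w : w < eps -> 2 ^+ i.+1 * w <= 2 ^+ k.+1 * eps.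
  move=> weps; apply: le_trans (ler_wpM2l _ (ltW weps)) _; first exact: exprn_ge0.
  by apply: ler_wpM2r; [exact: ltW | rewrite ler_eXn2l ?ltr1n].
have zsX : Xset (iter n (@Defs.shift R) z) by rewrite iter_shiftE => m; exact: zX.
split; first by rewrite distrC; exact: le_trans (dist_coord_le_dX i xX zX) (le_pow _ xz).
move: zsX zy; rewrite iter_shiftE => zsX zy.
exact: le_trans (dist_coord_le_dX i zsX yX) (le_pow _ zy).
Qed.

Lemma mane_gt0_of_alpha_ninfty x y : alpha h = -oo%E -> (0 < mane h x y)%E.
Proof.
move=> Ea; apply: (@lt_le_trans _ _ 1%:E); first by rewrite lte_fin ltr01.
apply: (@mane_ge x y _ 1) => // eps _ _.
apply: le_ereal_inf_tmp => _ [[|n] [z [n0 [_ ->]]]] //.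
rewrite /action Ea big_nat_recl //= addey // addye ?leey //.
rewrite gt_eqF //; apply: (@lt_le_trans _ _ 0%E); first exact: ltNy0.
by apply: sume_ge0 => i _; rewrite addey.
Qed.

End Mane.

Section Lipschitz.
Variable R : realType.
Variable h : R -> R -> R.

Lemma lipschitz2_gt0 : lipschitz2 h -> exists2 L : R, 0 < L &
  forall a b c d, in01 a -> in01 b -> in01 c -> in01 d ->
    `|h a b - h c d| <= L * (`|a - c| + `|b - d|).
Proof.
move=> [L hL]; exists (`|L| + 1); first by have := normr_ge0 L; lra.
move=> a b c d ha hb hc hd; apply: le_trans (hL _ _ _ _ ha hb hc hd) _.
by apply: ler_wpM2r; [rewrite addr_ge0 | have := ler_norm L; lra].
Qed.

Lemma lipschitz2_ub : lipschitz2 h -> exists B, forall a b, in01 a -> in01 b -> h a b <= B.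
Proof.
move=> /lipschitz2_gt0[L L0 hL]; exists (h 0 0 + L *+ 2) => a b ha hb.
have i0 : in01 (0 : R) by rewrite /in01 lexx ler01.
have := hL a b 0 0 ha hb i0 i0; rewrite !subr0 ler_norml => /andP[_].
move: ha hb => /andP[a0 a1] /andP[b0 b1]; rewrite !ger0_norm // mulr2n; nra.
Qed.

End Lipschitz.

Lemma ex_pow_lt (R : realType) (eps : R) : 0 < eps -> exists K, 1 / 2 ^+ K < eps.
Proof.
move=> eps0; have [K _ hK] := near_infty_natSinv_expn_lt (PosNum eps0).
by exists K; apply: hK => /=.
Qed.

Definition splice (R : realType) (x : nat -> R) K m (b : R) : nat -> R :=
  fun i => if (i <= K)%N then x i else if (i <= K + m)%N then b
           else x (i - (K + m).+1)%N.

Section Splice.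
Variable R : realType.
Variable h : R -> R -> R.
Implicit Types x : nat -> R.

Lemma splice_Bset x K m b eps : Xset x -> in01 b -> 1 / 2 ^+ K < eps ->
  Bset x x (K + m).+1 eps (splice x K m b).
Proof.
move=> xX b01 K_lt.
have sX : Xset (splice x K m b) by move=> i; rewrite /splice; case: ifP => _ //; case: ifP.
split => //; split.
  by apply: le_lt_trans (dX_le_prefix xX sX _) K_lt => i iK; rewrite /splice ltnW.
have -> : iter (K + m).+1 (@Defs.shift R) (splice x K m b) = x.
  apply/funext => k; rewrite iter_shiftE /splice.
  have -> : (k + (K + m).+1 <= K)%N = false by apply/negbTE; lia.
  have -> : (k + (K + m).+1 <= K + m)%N = false by apply/negbTE; lia.
  by rewrite addnK.
by rewrite dX_xx; apply: le_lt_trans K_lt; rewrite divr_ge0 ?exprn_ge0.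
Qed.

Lemma mane_lt0_of_alpha_pinfty x : Xset x -> alpha h = +oo%E -> (mane h x x < 0)%E.
Proof.
move=> xX Ea; apply: (@le_lt_trans _ _ (-1)%:E); last by rewrite lte_fin ltrN10.
apply: mane_le => eps eps0; have [K K_lt] := ex_pow_lt eps0.
have b01 : in01 (0 : R) by rewrite /in01 lexx ler01.
apply: le_trans (mane_inf_le_action h _ (splice_Bset 0 xX b01 K_lt)) _ => //.
by rewrite /action Ea big_nat_recl //= leNye.
Qed.

Lemma splice_cost_le x K N b r B : Xset x -> in01 b ->
  (forall a c, in01 a -> in01 c -> h a c - r <= B) ->
  \sum_(0 <= i < (K + N.+1).+1) (h (splice x K N.+1 b i) (splice x K N.+1 b i.+1) - r)
    <= B *+ K.+2 + (h b b - r) *+ N.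
Proof.
move=> xX b01 hB; set z := splice x K N.+1 b.
have zX : Xset z by move=> i; rewrite /z /splice; case: ifP => _ //; case: ifP.
rewrite (big_cat_nat _ (n := K.+1)) //= ?ltnS ?leq_addr //.
rewrite (big_cat_nat _ (n := (K + N.+1)%N) (m := K.+1)) //= ?addnS ?ltnS ?leq_addr //.
have s1 : \sum_(0 <= i < K.+1) (h (z i) (z i.+1) - r) <= B *+ K.+1.
  rewrite -[X in _ <= _ *+ X](subn0 K.+1) -sumr_const_nat.
  by apply: ler_sum_nat => i _; exact: hB (zX _) (zX _).
have s2 : \sum_(K.+1 <= i < (K + N).+1) (h (z i) (z i.+1) - r) = (h b b - r) *+ N.
  transitivity (\sum_(K.+1 <= i < (K + N).+1) (h b b - r)); last first.
    by rewrite sumr_const_nat subSS addKn.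
  apply: eq_big_nat => i /andP[Ki iKN]; rewrite /z /splice.
  have -> : (i <= K)%N = false by apply/negbTE; lia.
  have -> : (i.+1 <= K)%N = false by apply/negbTE; lia.
  have -> : (i <= K + N.+1)%N by lia.
  by have -> : (i < K + N.+1)%N by lia.
have s3 : \sum_((K + N).+1 <= i < (K + N).+2) (h (z i) (z i.+1) - r) <= B.
  by rewrite big_nat1; exact: hB (zX _) (zX _).
by rewrite s2 mulrS; lra.
Qed.

Lemma mane_lt0_of_diag_lt_alpha x r b : lipschitz2 h -> Xset x -> alpha h = r%:E ->
  in01 b -> h b b < r -> (mane h x x < 0)%E.
Proof.
move=> hlip xX Ea b01 hbr; have [B hB] := lipschitz2_ub hlip.
apply: (@le_lt_trans _ _ (-1)%:E); last by rewrite lte_fin ltrN10.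
apply: mane_le => eps eps0; have [K K_lt] := ex_pow_lt eps0.
pose y := ((B - r) *+ K.+2 + 1) / (r - h b b); pose N := Num.bound `|y|.
have yN : y < N%:R by apply: le_lt_trans (ler_norm y) (archi_boundP _).
apply: le_trans (mane_inf_le_action h _ (splice_Bset N.+1 xX b01 K_lt)) _ => //.
rewrite (action_fin _ _ Ea) lee_fin.
apply: le_trans (splice_cost_le K N (B := B - r) xX b01 _) _.
  by move=> a c ha hc; rewrite lerD2r; exact: hB.
rewrite ltr_pdivrMr ?subr_gt0 // in yN; rewrite -mulr_natr; lra.
Qed.

End Splice.

Section LowerBound.
Variable R : realType.
Variable h : R -> R -> R.
Implicit Types x z : nat -> R.

Lemma path_cost_rotate z n j : (0 < n)%N ->
  \sum_(0 <= i < n) h (z (i + j)%N) (z (i + j).+1)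
    = path_cost h (fun k => z (j + k %% n)%N) n
      + (h (z (j + n.-1)%N) (z (j + n)%N) - h (z (j + n.-1)%N) (z j)).
Proof.
case: n => [//|N] _; rewrite /path_cost [in RHS]big_nat_recr //.
have -> : \sum_(0 <= k < N) h (z (j + k %% N.+1)%N) (z (j + k.+1 %% N.+1)%N)
    = \sum_(0 <= i < N) h (z (i + j)%N) (z (i + j).+1).
  apply: eq_big_nat => k /andP[_ kN].
  have k1 : (k < N.+1)%N by lia.
  have k2 : (k.+1 < N.+1)%N by lia.
  by rewrite (modn_small k1) (modn_small k2) addnS (addnC j k).
rewrite modnn addn0 (modn_small (ltnSn N)) big_nat_recr //=.
rewrite (addnC N j) addnS; ring.
Qed.

Lemma path_cost_rotate_le z n j L e : 0 <= L ->
  (forall a b c d, in01 a -> in01 b -> in01 c -> in01 d ->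
    `|h a b - h c d| <= L * (`|a - c| + `|b - d|)) ->
  Xset z -> (0 < n)%N -> (forall i, (i <= j)%N -> `|z (i + n)%N - z i| <= e) ->
  path_cost h (fun k => z (j + k %% n)%N) n - L * e *+ (2 * j).+1
    <= \sum_(0 <= i < n) h (z i) (z i.+1).
Proof.
move=> L0 hL zX n0 ze.
rewrite (sum_nat_window (fun i => h (z i) (z i.+1)) n j) /= path_cost_rotate //.
have shift_err : - (L * e *+ 2) *+ j
    <= \sum_(0 <= i < j) (h (z i) (z i.+1) - h (z (i + n)%N) (z (i + n).+1)).
  rewrite -mulNrn -[X in _ *+ X](subn0 j) -sumr_const_nat.
  apply: ler_sum_nat => i /andP[_ ij].
  have := ze i (ltnW ij); have := ze i.+1 ij; rewrite addSn => e1 e2.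
  have := hL _ _ _ _ (zX i) (zX i.+1) (zX (i + n)%N) (zX (i + n).+1).
  rewrite ler_norml => /andP[+ _].
  have : L * (`|z i - z (i + n)%N| + `|z i.+1 - z (i + n).+1|) <= L * (e + e).
    by apply: ler_wpM2l => //; rewrite distrC [`|z i.+1 - _|]distrC; exact: lerD.
  rewrite mulr2n; lra.
have close_err : - (L * e)
    <= h (z (j + n.-1)%N) (z (j + n)%N) - h (z (j + n.-1)%N) (z j).
  have := hL _ _ _ _ (zX (j + n.-1)%N) (zX (j + n)%N) (zX (j + n.-1)%N) (zX j).
  rewrite subrr normr0 add0r ler_norml => /andP[+ _].
  have : L * `|z (j + n)%N - z j| <= L * e by apply: ler_wpM2l => //; exact: ze.
  lra.
rewrite mulNrn in shift_err; rewrite mulrS mulrnA; lra.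
Qed.

Lemma Bset_closed_path x z n eps j L :
  0 <= L -> (forall a b c d, in01 a -> in01 b -> in01 c -> in01 d ->
    `|h a b - h c d| <= L * (`|a - c| + `|b - d|)) ->
  Xset x -> 0 < eps -> (0 < n)%N -> Bset x x n eps z ->
  let e := 2 ^+ j.+2 * eps in
  exists c, [/\ forall k, in01 (c k), c n = c 0%N, `|c 0%N - x j| <= 3 * e,
    `|c 1%N - x j.+1| <= 3 * e &
    path_cost h c n - L * (e + e) *+ (2 * j).+1 <= \sum_(0 <= i < n) h (z i) (z i.+1)].
Proof.
move=> L0 hL xX eps0 n0 zB e; have zX : Xset z := zB.1.
have e0 : 0 <= e by rewrite mulr_ge0 ?exprn_ge0 ?ltW.
have near_x i : (i <= j.+1)%N -> `|z i - x i| <= e /\ `|z (i + n)%N - x i| <= e.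
  exact: Bset_coord.
have ret i : (i <= j.+1)%N -> `|z (i + n)%N - z i| <= e + e.
  move=> /near_x[zi zni]; apply: le_trans (ler_distD (x i) _ _) _.
  by rewrite distrC in zi; exact: lerD.
exists (fun k => z (j + k %% n)%N); split.
- by move=> k; exact: zX.
- by rewrite modnn mod0n.
- by rewrite mod0n addn0; have [+ _] := near_x j (leqnSn j); lra.
- have [zj1 _] := near_x j.+1 (leqnn _).
  move: (n0); rewrite leq_eqVlt eq_sym => /orP[/eqP n1|n_gt1].
    move: (ret j (leqnSn j)); rewrite n1 modnn addn0 addn1 => zjj.
    apply: le_trans (ler_distD (z j.+1) _ _) _; rewrite distrC; lra.
  by rewrite (modn_small n_gt1) addn1; lra.
- exact: path_cost_rotate_le hL zX n0 (fun i ij => ret i (leqW ij)).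
Qed.

Lemma mane_gt0_of_cycle_excess x r j d kappa :
  lipschitz2 h -> Xset x -> alpha h = r%:E -> 0 < d -> 0 < kappa ->
  (forall c n, (0 < n)%N -> (forall k, in01 (c k)) -> c n = c 0%N ->
     `|c 0%N - x j| <= d -> `|c 1%N - x j.+1| <= d -> r *+ n + kappa <= path_cost h c n) ->
  (0 < mane h x x)%E.
Proof.
move=> hlip xX Ea d0 kappa0 excess; have [L L0 hL] := lipschitz2_gt0 hlip.
pose M : R := (2 * j).+1%:R.
have M0 : 0 < M by rewrite ltr0n.
pose del := Num.min (d / 3) (kappa / (L * 4 * M)).
have del0 : 0 < del by rewrite lt_min !divr_gt0 ?mulr_gt0.
apply: (@lt_le_trans _ _ (kappa / 2)%:E); first by rewrite lte_fin divr_gt0.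
apply: (@mane_ge _ _ _ _ _ (del / 2 ^+ j.+2)); first by rewrite divr_gt0 ?exprn_gt0.
move=> eps eps0 eps_lt; set e := 2 ^+ j.+2 * eps.
have e_del : e <= del by rewrite /e mulrC -ler_pdivlMr ?exprn_gt0 // ltW.
have e_d : 3 * e <= d.
  have : del <= d / 3 by rewrite ge_min lexx.
  lra.
have e_kappa : L * (e + e) *+ (2 * j).+1 <= kappa / 2.
  have : del <= kappa / (L * 4 * M) by rewrite ge_min lexx orbT.
  rewrite ler_pdivlMr ?mulr_gt0 // -mulr_natr -/M => ek.
  have : 0 <= (del - e) * (L * M) by rewrite mulr_ge0 ?subr_ge0 // ltW ?mulr_gt0.
  lra.
apply: le_ereal_inf_tmp => _ [n [z [n0 [zB ->]]]].
rewrite -/(action h z n) (action_fin _ _ Ea) lee_fin sumrB sumr_const_nat subn0.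
have [c [c01 closed c0 c1 cost_le]] := Bset_closed_path j (ltW L0) hL xX eps0 n0 zB.
have := excess c n n0 c01 closed (le_trans c0 e_d) (le_trans c1 e_d).
rewrite -/e in cost_le; lra.
Qed.

End LowerBound.

Section Aubry.
Variable R : realType.
Variable h : R -> R -> R.
Implicit Types x c : nat -> R.

Lemma diag_cost_ge c n r : (forall b, in01 b -> r <= h b b) -> (forall k, in01 (c k)) ->
  (0 < n)%N -> r *+ n.-1 + h (c 0%N) (c 0%N) <= diag_cost h c n.
Proof.
move=> hr c01; case: n => [//|n] _.
rewrite /diag_cost big_nat_recl //= [X in _ <= X]addrC lerD2r.
rewrite -[X in _ *+ X](subn0 n) -sumr_const_nat.
by apply: ler_sum_nat => i _; exact: hr (c01 _).
Qed.

Lemma mane_gt0_of_jump x r j : lipschitz2 h -> H3 h -> Xset x -> alpha h = r%:E ->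
  (forall b, in01 b -> r <= h b b) -> x j != x j.+1 -> (0 < mane h x x)%E.
Proof.
move=> hlip hH3 xX Ea hr jump.
have [m [d [kappa [m01 d0 kappa0 gap]]]] := crossing_gap hH3 (xX j) (xX j.+1) jump.
apply: (mane_gt0_of_cycle_excess hlip xX Ea d0 kappa0) => c n n0 c01 closed c0 c1.
have := path_cost_insert hH3 n0 c01 closed m01.
have := diag_cost_ge hr c01 n0.
have := gap _ _ (c01 0%N) (c01 1%N) c0 c1.
have := hr _ (c01 0%N).
rewrite -[in r *+ n](prednK n0) (mulrSr r); lra.
Qed.

Lemma mane_gt0_of_const x r a : lipschitz2 h -> H3 h -> Xset x -> alpha h = r%:E ->
  (forall b, in01 b -> r <= h b b) -> (forall i, x i = a) -> r < h a a ->
  (0 < mane h x x)%E.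
Proof.
move=> hlip hH3 xX Ea hr xa ra; have [L L0 hL] := lipschitz2_gt0 hlip.
have a01 : in01 a by rewrite -(xa 0%N); exact: xX.
pose d := (h a a - r) / (L *+ 4).
have d0 : 0 < d by rewrite divr_gt0 ?subr_gt0 ?mulrn_wgt0.
have kappa0 : 0 < (h a a - r) / 2 by rewrite divr_gt0 ?subr_gt0.
apply: (@mane_gt0_of_cycle_excess _ _ _ _ 0 _ _ hlip xX Ea d0 kappa0).
move=> c n n0 c01 closed; rewrite xa => c0 _.
have := diag_cost_le_path_cost hH3 c01 closed.
have := diag_cost_ge hr c01 n0.
have := hL _ _ _ _ (c01 0%N) (c01 0%N) a01 a01; rewrite ler_norml => /andP[+ _].
have : L * (`|c 0%N - a| + `|c 0%N - a|) <= L * (d + d).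
  by apply: ler_wpM2l; [exact: ltW | exact: lerD].
have -> : L * (d + d) = (h a a - r) / 2 by rewrite /d -mulr_natr; field; rewrite gt_eqF.
rewrite -[in r *+ n](prednK n0) (mulrSr r); lra.
Qed.

Lemma hstar_eq a : in01 a -> (forall b, in01 b -> h a a <= h b b) -> hstar h = h a a.
Proof.
move=> a01 amin; apply/eqP; rewrite eq_le; apply/andP; split.
  by apply: ge_inf; [exists (h a a) => _ [b b01 <-]; exact: amin | exists a].
apply: lb_le_inf; first by exists (h a a), a.
by move=> _ [b b01 <-]; exact: amin.
Qed.

End Aubry.

Theorem lemma3p3 (R : realType) (h : R -> R -> R) (x : nat -> R) :
  classH h -> shift_periodic x -> aubry h x ->
  exists a : R, m_h h a /\ x = (fun _ => a).
Proof.
move=> [hlip [hH3 _]] _ [xX mane0].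
have mane_neq0 (P : Prop) : (mane h x x < 0)%E \/ (0 < mane h x x)%E -> P.
  by rewrite mane0 ltxx => -[].
case Ea : (alpha h) => [r||]; last first.
- by apply: mane_neq0; right; exact: mane_gt0_of_alpha_ninfty.
- by apply: mane_neq0; left; exact: mane_lt0_of_alpha_pinfty.
have r_le_diag b : in01 b -> r <= h b b.
  move=> b01; rewrite leNgt; apply/negP => br; apply: mane_neq0; left.
  exact: mane_lt0_of_diag_lt_alpha hlip xX Ea b01 br.
have x_const i : x i = x 0%N.
  elim: i => // i IH; rewrite -IH; case: (eqVneq (x i) (x i.+1)) => [-> //|jump].
  by apply: mane_neq0; right; exact: mane_gt0_of_jump hlip hH3 xX Ea r_le_diag jump.
have diag_le_r : h (x 0%N) (x 0%N) <= r.
  rewrite leNgt; apply/negP => rx; apply: mane_neq0; right.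
  exact: mane_gt0_of_const hlip hH3 xX Ea r_le_diag x_const rx.
exists (x 0%N); split; last exact/funext.
split; first exact: xX.
by rewrite (hstar_eq (xX 0%N)) // => b b01; exact: le_trans diag_le_r (r_le_diag b b01).
Qed.
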